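(* Let $s\ge1$ and $k\ge1$ be fixed integers. (a) Let $P_n\ge s$ be positive integers and $t_n\in[0,1]$ with $\frac{1}{s!}t_n^{2s}P_n^{s}=\frac{\ln n+(k-1)\ln\ln n+\beta_n}{n}$ and $\lim_{n\to\infty}\beta_n=-\infty$. Then there exist $\widetilde{t_n},\widetilde{P_n}$ with $\frac{1}{s!}\widetilde{t_n}^{2s}\widetilde{P_n}^{s}=\frac{\ln n+(k-1)\ln\ln n+\widetilde{\beta_n}}{n}$, $\lim_{n\to\infty}\widetilde{\beta_n}=-\infty$ and $\widetilde{\beta_n}=-O(\ln\ln n)$, such that there is a coupling under which $H_s(n,t_n,P_n)$ is a spanning subgraph of $H_s(n,\widetilde{t_n},\widetilde{P_n})$. (b) Let $P_n\ge s$ be positive integers and $t_n\in[0,1]$ with $\frac{1}{s!}t_n^{2s}P_n^{s}=\frac{\ln n+(k-1)\ln\ln n+\beta_n}{n}$ and $\lim_{n\to\infty}\beta_n=\infty$. Then there exist $\widehat{t_n},\widehat{P_n}$ with $\frac{1}{s!}\widehat{t_n}^{2s}\widehat{P_n}^{s}=\frac{\ln n+(k-1)\ln\ln n+\widehat{\beta_n}}{n}$, $\lim_{n\to\infty}\widehat{\beta_n}=\infty$ and $\widehat{\beta_n}=O(\ln\ln n)$, such that there is a coupling under which $H_s(n,t_n,P_n)$ is a spanning supergraph of $H_s(n,\widehat{t_n},\widehat{P_n})$.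
   Context: The binomial random $s$-intersection graph $H_s(n,t_n,P_n)$ has $n$ vertices and a pool of $P_n$ distinct items; each item is assigned to each vertex independently with probability $t_n$, and two vertices are adjacent iff they share at least $s$ items. A coupling of two random graphs $G_1,G_2$ on the same vertex set is a probability space carrying random graphs $G_1',G_2'$ with the distributions of $G_1,G_2$ respectively; ''$G_1$ is a spanning subgraph (resp. supergraph) of $G_2$ under the coupling'' means $G_1'$ is a spanning subgraph (resp. supergraph) of $G_2'$ almost surely. *)

From HB Require Import structures.
From mathcomp Require Import all_boot all_order all_algebra.
From mathcomp Require Import all_classical all_reals all_analysis.
Set Implicit Arguments. Unset Strict Implicit. Unset Printing Implicit Defensive.
Import Order.TTheory GRing.Theory Num.Theory.
Local Open Scope ring_scope.

Definition graph (n : nat) := {ffun 'I_n -> {set 'I_n}}.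

Definition assignment (n P : nat) := {ffun 'I_n -> {set 'I_P}}.

(* Probability of an assignment in the binomial model: each item is assigned
   to each vertex independently with probability t. *)
Definition assign_prob (R : realType) (n P : nat) (t : R) (S : assignment n P) : R :=
  \prod_(v : 'I_n) (t ^+ #|S v| * (1 - t) ^+ (P - #|S v|)).

Definition sint_graph (n P s : nat) (S : assignment n P) : graph n :=
  [ffun i => [set j | (i != j) && (s <= #|S i :&: S j|)%N]].

Definition Hs_pmf (R : realType) (s n : nat) (t : R) (P : nat) : graph n -> R :=
  fun g => \sum_(S : assignment n P | sint_graph s S == g) assign_prob t S.

Definition spanning_subgraph (n : nat) (g1 g2 : graph n) : Prop :=
  forall i : 'I_n, g1 i \subset g2 i.

Definition coupling_subgraph (R : realType) (n : nat) (mu1 mu2 : graph n -> R) : Prop :=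
  exists nu : graph n * graph n -> R,
    [/\ forall p, 0 <= nu p,
        forall g1, \sum_(g2 : graph n) nu (g1, g2) = mu1 g1,
        forall g2, \sum_(g1 : graph n) nu (g1, g2) = mu2 g2 &
        forall p, nu p != 0 -> spanning_subgraph p.1 p.2].

Definition scaling_eq (R : realType) (s k n : nat) (t : R) (P : nat) (beta : R) : Prop :=
  (s`!%:R)^-1 * t ^+ (2 * s) * (P%:R) ^+ s
  = (ln (n%:R) + (k.-1)%:R * ln (ln (n%:R)) + beta) / n%:R.

Arguments Hs_pmf {R} s n t P _.

From HB Require Import structures.
From mathcomp Require Import all_boot all_order all_algebra.
From mathcomp Require Import all_classical all_reals all_analysis.
From mathcomp Require Import ring lra zify.
Import Order.TTheory GRing.Theory Num.Theory.
Local Open Scope classical_set_scope.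
Local Open Scope ring_scope.
Set Implicit Arguments. Unset Strict Implicit. Unset Printing Implicit Defensive.

(* Raising t with the pool size fixed only adds items, so the monotone coupling
   of the item assignments makes the first s-intersection graph a spanning
   subgraph of the second.  It therefore suffices to keep P, change beta and
   solve the scaling equation for t.  In (a) beta is replaced by
   max(beta, -ln ln n) and in (b) by min(beta, ln ln n) (both clamped so that
   the equation keeps a solution in [0, 1]); this moves t up, resp. down, still
   tends to -oo, resp. +oo, and is eventually O(ln ln n) because
   ln n + (k-1) ln ln n = o(n / s!). *)

Lemma sint_graph_subgraph n P s (S S' : assignment n P) :
  (forall v, S v \subset S' v) -> spanning_subgraph (sint_graph s S) (sint_graph s S').
Proof.
move=> sub i; apply/fintype.subsetP => j; rewrite !ffunE !inE => /andP [-> hs] /=.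
exact/(leq_trans hs)/subset_leq_card/finset.setISS.
Qed.

Section ItemCoupling.
Variables (R : realType) (t1 t2 : R).

(* Joint law of (x \in A, x \in B) when one uniform U in [0, 1] decides both
   events as U < t1 and U < t2. *)
Definition item_pair_weight (a b : bool) : R :=
  if a then (if b then t1 else 0) else (if b then t2 - t1 else 1 - t2).

Definition set_pair_weight (P : nat) (A B : {set 'I_P}) : R :=
  \prod_(x : 'I_P) item_pair_weight (x \in A) (x \in B).

Definition assignment_pair_weight (n P : nat) (S S' : assignment n P) : R :=
  \prod_(v : 'I_n) set_pair_weight (S v) (S' v).

Lemma sum_set_prod_mem P (g : 'I_P -> bool -> R) :
  \sum_(B : {set 'I_P}) \prod_(x : 'I_P) g x (x \in B) =
  \prod_(x : 'I_P) (g x true + g x false).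
Proof.
under [RHS]eq_bigr do rewrite -big_bool.
rewrite bigA_distr_bigA /= (reindex (fun f : {ffun 'I_P -> bool} => finset f)) /=.
  by apply: eq_bigr => f _; apply: eq_bigr => x _; rewrite inE.
exists (fun B : {set 'I_P} => [ffun x => x \in B]) => [f _ | B _].
  by apply/ffunP => x; rewrite ffunE inE.
by apply/setP => x; rewrite inE ffunE.
Qed.

Lemma prod_mem_if P (A : {set 'I_P}) (a b : R) :
  \prod_(x : 'I_P) (if x \in A then a else b) = a ^+ #|A| * b ^+ (P - #|A|).
Proof.
rewrite (bigID (mem A)) /= (eq_bigr (fun=> a)) => [|x ->] //.
rewrite [X in _ * X](eq_bigr (fun=> b)) => [|x /negbTE ->] //.
have -> : (P - #|A| = #|[predC A]|)%N by have := cardC A; rewrite card_ord; lia.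
by rewrite !prodr_const.
Qed.

Lemma set_pair_weight_sum_r P (A : {set 'I_P}) :
  \sum_B set_pair_weight A B = t1 ^+ #|A| * (1 - t1) ^+ (P - #|A|).
Proof.
rewrite (sum_set_prod_mem (fun x b => item_pair_weight (x \in A) b)) -prod_mem_if.
by apply: eq_bigr => x _; rewrite /item_pair_weight; case: (x \in A); ring.
Qed.

Lemma set_pair_weight_sum_l P (B : {set 'I_P}) :
  \sum_A set_pair_weight A B = t2 ^+ #|B| * (1 - t2) ^+ (P - #|B|).
Proof.
rewrite (sum_set_prod_mem (fun x a => item_pair_weight a (x \in B))) -prod_mem_if.
by apply: eq_bigr => x _; rewrite /item_pair_weight; case: (x \in B); ring.
Qed.

Lemma assignment_pair_weight_sum_r n P (S : assignment n P) :
  \sum_S' assignment_pair_weight S S' = assign_prob t1 S.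
Proof.
by rewrite /assign_prob -(eq_bigr _ (fun v _ => set_pair_weight_sum_r (S v))) bigA_distr_bigA.
Qed.

Lemma assignment_pair_weight_sum_l n P (S' : assignment n P) :
  \sum_S assignment_pair_weight S S' = assign_prob t2 S'.
Proof.
by rewrite /assign_prob -(eq_bigr _ (fun v _ => set_pair_weight_sum_l (S' v))) bigA_distr_bigA.
Qed.

Lemma set_pair_weight_neq0_subset P (A B : {set 'I_P}) :
  set_pair_weight A B != 0 -> A \subset B.
Proof.
move=> /prodf_neq0 nz; apply/fintype.subsetP => x xA.
by move: (nz x isT); rewrite /item_pair_weight xA; case: (x \in B); rewrite ?eqxx.
Qed.

Hypotheses (t1_ge0 : 0 <= t1) (t1_le_t2 : t1 <= t2) (t2_le1 : t2 <= 1).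

Lemma assignment_pair_weight_ge0 n P (S S' : assignment n P) :
  0 <= assignment_pair_weight S S'.
Proof.
apply: prodr_ge0 => v _; apply: prodr_ge0 => x _.
by rewrite /item_pair_weight; do 2 case: (_ \in _); rewrite ?subr_ge0.
Qed.

Lemma Hs_coupling_subgraph s n P :
  coupling_subgraph (Hs_pmf s n t1 P) (Hs_pmf s n t2 P).
Proof.
pose nu (p : graph n * graph n) := \sum_(S : assignment n P | sint_graph s S == p.1)
  \sum_(S' : assignment n P | sint_graph s S' == p.2) assignment_pair_weight S S'.
have nu_ge0 (g2 : graph n) (S : assignment n P) :
  0 <= \sum_(S' | sint_graph s S' == g2) assignment_pair_weight S S'.
  by apply: sumr_ge0 => S' _; exact: assignment_pair_weight_ge0.
exists nu; split.
- by move=> p; apply: sumr_ge0 => S _; exact: nu_ge0.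
- move=> g1; rewrite /nu /Hs_pmf /= exchange_big /=; apply: eq_bigr => S _.
  by rewrite -assignment_pair_weight_sum_r [RHS](partition_big (sint_graph s) predT).
- move=> g2; rewrite /Hs_pmf; transitivity
    (\sum_(S : assignment n P) \sum_(S' | sint_graph s S' == g2) assignment_pair_weight S S').
    by rewrite [RHS](partition_big (sint_graph s) predT).
  by rewrite exchange_big /=; apply: eq_bigr => S' _; exact: assignment_pair_weight_sum_l.
- move=> [g1 g2] /eqP /(psumr_neq0P (fun S _ => nu_ge0 g2 S)) [S /andP [/eqP <- /lt0r_neq0]].
  move=> /eqP /(psumr_neq0P (fun S' _ => assignment_pair_weight_ge0 S S')).
  case=> S' /andP [/eqP <- /lt0r_neq0 /prodf_neq0 nz].
  by apply: sint_graph_subgraph => v; apply: set_pair_weight_neq0_subset; exact: nz.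
Qed.

End ItemCoupling.

Section Asymptotics.
Variable R : realType.

Lemma cvgy_ln : @ln R x @[x --> +oo] --> +oo.
Proof.
apply/cvgryPge => A; near=> x.
rewrite -[A]expRK ler_ln ?posrE ?expR_gt0 //.
Unshelve. all: by end_near.
Qed.

Lemma cvgn_lnln : ln (ln (n%:R : R)) @[n --> \oo] --> +oo.
Proof.
exact: (cvg_comp _ _ (cvg_comp _ _ (@cvgr_idn R) cvgy_ln) cvgy_ln).
Qed.

Lemma near_oo_mul_ln_le (c : R) : 0 <= c -> \forall n \near \oo, c * ln (n%:R : R) <= n%:R.
Proof.
move=> c0; near=> n.
have n0 : 0 < (n%:R : R) by rewrite ltr0n; near: n; exists 1%N.
have sn0 : 0 < Num.sqrt (n%:R : R) by rewrite sqrtr_gt0.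
have sn2c : 2 * c <= Num.sqrt (n%:R : R).
  rewrite -(ger0_norm (mulr_ge0 _ c0)) // -sqrtr_sqr; apply: ler_wsqrtr.
  by near: n; move/cvgryPge: (@cvgr_idn R); apply.
rewrite -{1}(sqr_sqrtr (ltW n0)) lnXn // -[X in _ <= X](sqr_sqrtr (ltW n0)).
have := ln_sublinear sn0; nra.
Unshelve. all: by end_near.
Qed.
End Asymptotics.

Lemma exprn_powRV (R : realType) m (c : R) :
  (0 < m)%N -> 0 <= c -> (c `^ m%:R^-1) ^+ m = c.
Proof.
move=> m0 c0; rewrite -powR_mulrn ?powR_ge0 // -powRrM mulVf ?powRr1 //.
by rewrite pnatr_eq0 -lt0n.
Qed.

Lemma powRV_exprn (R : realType) m (c : R) :
  (0 < m)%N -> 0 <= c -> (c ^+ m) `^ m%:R^-1 = c.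
Proof.
move=> m0 c0; rewrite -powR_mulrn // -powRrM mulfV ?powRr1 //.
by rewrite pnatr_eq0 -lt0n.
Qed.

Lemma ler_powRV (R : realType) m (x y : R) :
  0 <= x -> x <= y -> x `^ m%:R^-1 <= y `^ m%:R^-1.
Proof.
by move=> x0 xy; apply: ge0_ler_powR; rewrite ?invr_ge0 ?nnegrE //; exact: le_trans xy.
Qed.

Section Scaling.
Variables (R : realType) (s k : nat).
Hypothesis s_gt0 : (0 < s)%N.

Definition threshold (n : nat) : R := ln n%:R + k.-1%:R * ln (ln n%:R).

Definition full_scale (n P : nat) : R := n%:R * P%:R ^+ s / s`!%:R.

Lemma full_scale_ge0 n P : 0 <= full_scale n P.
Proof. by rewrite /full_scale !mulr_ge0 ?invr_ge0 ?exprn_ge0. Qed.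

Lemma full_scale_gt0 n P : (0 < n)%N -> (0 < P)%N -> 0 < full_scale n P.
Proof. by move=> n0 P0; rewrite /full_scale !mulr_gt0 ?invr_gt0 ?exprn_gt0 ?ltr0n ?fact_gt0. Qed.

Lemma scaling_eqE n t P beta : (0 < n)%N ->
  scaling_eq s k n t P beta <-> t ^+ (2 * s) * full_scale n P = threshold n + beta.
Proof.
move=> n0; have n_neq0 : n%:R != 0 :> R by rewrite pnatr_eq0 -lt0n.
have fact_neq0 : s`!%:R != 0 :> R by rewrite pnatr_eq0 -lt0n fact_gt0.
rewrite /scaling_eq; split => [E | <-]; last by rewrite /full_scale; field; exact/andP.
transitivity ((s`!%:R)^-1 * t ^+ (2 * s) * P%:R ^+ s * n%:R).
  by rewrite /full_scale; field.
by rewrite E mulfVK.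
Qed.

Lemma scaling_eq_range n t P beta : (0 < n)%N -> 0 <= t <= 1 ->
  scaling_eq s k n t P beta -> 0 <= threshold n + beta <= full_scale n P.
Proof.
move=> n0 /andP [t0 t1] /(scaling_eqE _ _ _ n0) <-.
rewrite mulr_ge0 ?exprn_ge0 ?full_scale_ge0 //= ler_piMl ?full_scale_ge0 //.
by rewrite exprn_ile1.
Qed.

Definition scaling_root (n P : nat) (b : R) : R :=
  ((threshold n + b) / full_scale n P) `^ (2 * s)%:R^-1.

Lemma scaling_eq_root n P b : (0 < n)%N -> (0 < P)%N -> 0 <= threshold n + b ->
  scaling_eq s k n (scaling_root n P b) P b.
Proof.
move=> n0 P0 b0; apply/scaling_eqE => //.
rewrite exprn_powRV ?muln_gt0 ?divr_ge0 ?full_scale_ge0 // mulfVK //.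
by rewrite gt_eqF ?full_scale_gt0.
Qed.

Lemma scaling_root_ge0 n P b : 0 <= scaling_root n P b.
Proof. exact: powR_ge0. Qed.

Lemma le_scaling_root n P b1 b2 : 0 <= threshold n + b1 -> b1 <= b2 ->
  scaling_root n P b1 <= scaling_root n P b2.
Proof.
move=> b0 b12; apply: ler_powRV; first by rewrite divr_ge0 ?full_scale_ge0.
by rewrite ler_wpM2r ?invr_ge0 ?full_scale_ge0 ?lerD2l.
Qed.

Lemma scaling_root_le1 n P b : 0 <= threshold n + b <= full_scale n P ->
  scaling_root n P b <= 1.
Proof.
move=> /andP [b0 b1]; apply: (@le_trans _ _ (1 `^ (2 * s)%:R^-1)); last by rewrite powR1.
apply: ler_powRV.
  by rewrite divr_ge0 ?full_scale_ge0.
have [->|F0] := eqVneq (full_scale n P) 0; first by rewrite invr0 mulr0.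
by rewrite ler_pdivrMr ?mul1r // lt_def F0 full_scale_ge0.
Qed.

Lemma scaling_rootE n t P beta : (0 < n)%N -> (0 < P)%N -> 0 <= t ->
  scaling_eq s k n t P beta -> scaling_root n P beta = t.
Proof.
move=> n0 P0 t0 /(scaling_eqE _ _ _ n0) E.
by rewrite /scaling_root -E mulfK ?gt_eqF ?full_scale_gt0 ?powRV_exprn ?muln_gt0.
Qed.

Lemma retarget_scaling (t : nat -> R) (P : nat -> nat) (beta b : nat -> R) :
  (forall n, (0 < P n)%N) -> (forall n, 0 <= t n <= 1) ->
  (forall n, (0 < n)%N -> scaling_eq s k n (t n) (P n) (beta n)) ->
  (forall n, (0 < n)%N -> 0 <= threshold n + b n <= full_scale n (P n)) ->
  exists t' : nat -> R,
    [/\ forall n, 0 <= t' n <= 1,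
        forall n, (0 < n)%N -> scaling_eq s k n (t' n) (P n) (b n),
        forall n, beta n <= b n -> t n <= t' n &
        forall n, b n <= beta n -> t' n <= t n].
Proof.
move=> P0 t01 t_scaling b_range.
have t_root n : (0 < n)%N -> t n = scaling_root n (P n) (beta n).
  move=> n0; have /andP [t0 _] := t01 n.
  by rewrite (scaling_rootE n0 (P0 n) t0 (t_scaling n n0)).
have beta_ge n : (0 < n)%N -> 0 <= threshold n + beta n.
  by move=> n0; case/andP: (scaling_eq_range n0 (t01 n) (t_scaling n n0)).
(* At n = 0 the scaling equation is vacuous, so t itself is kept. *)
exists (fun n => if n == 0%N then t n else scaling_root n (P n) (b n)); split.
- move=> n; case: eqP => [_|/eqP n0]; first exact: t01.
  by rewrite scaling_root_ge0 scaling_root_le1 // b_range // lt0n.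
- move=> n n0; rewrite (gtn_eqF n0); apply: scaling_eq_root => //.
  by case/andP: (b_range n n0).
- move=> n le_b; case: posnP => [->|n0] //; rewrite t_root //.
  exact: le_scaling_root (beta_ge n n0) le_b.
- move=> n le_b; case: posnP => [->|n0] //; rewrite t_root //.
  apply: le_scaling_root le_b; by case/andP: (b_range n n0).
Qed.
End Scaling.

Lemma near_threshold_le_full_scale (R : realType) s k (P : nat -> nat) :
  (forall n, (0 < P n)%N) -> \forall n \near \oo, threshold R k n <= full_scale R s n (P n).
Proof.
move=> P0; near=> n.
have n1 : 1 < (n%:R : R) by rewrite ltr1n; near: n; exists 2%N.
have ln_n_gt0 : 0 < ln (n%:R : R) by rewrite ln_gt0.
have lnln_le : ln (ln (n%:R : R)) <= ln n%:R by rewrite ltW ?ln_sublinear.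
have ln_le : k.-1.+1%:R * ln (n%:R : R) <= n%:R / s`!%:R.
  rewrite ler_pdivlMr // mulrAC; near: n.
  by apply: near_oo_mul_ln_le; rewrite mulr_ge0.
have scale_ge : n%:R / s`!%:R <= full_scale R s n (P n).
  rewrite /full_scale mulrAC ler_peMr ?divr_ge0 ?ler0n //.
  by rewrite exprn_ege1 // ler1n.
apply: le_trans scale_ge; apply: le_trans ln_le.
have := ler_wpM2l (ler0n R k.-1) lnln_le.
rewrite /threshold -natr1; lra.
Unshelve. all: by end_near.
Qed.

Section SlowDivergence.
Variables (R : realType) (s k : nat) (P : nat -> nat) (beta : nat -> R).
Hypothesis P_gt0 : forall n, (0 < P n)%N.
Hypothesis beta_range : forall n, (0 < n)%N ->
  0 <= threshold R k n + beta n <= full_scale R s n (P n).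

Lemma slow_beta_Ny : beta @ \oo --> -oo ->
  exists bb : nat -> R,
    [/\ forall n, beta n <= bb n,
        forall n, (0 < n)%N -> 0 <= threshold R k n + bb n <= full_scale R s n (P n),
        bb @ \oo --> -oo &
        exists C : R, exists N : nat, forall n, (N <= n)%N -> `|bb n| <= C * ln (ln n%:R)].
Proof.
move=> beta_Ny.
pose bb n := Num.max (beta n)
  (Num.min (- ln (ln (n%:R : R))) (full_scale R s n (P n) - threshold R k n)).
have le_bb n : beta n <= bb n by rewrite le_max lexx.
exists bb; split => //.
- move=> n n0; have /andP [lo hi] := beta_range n0.
  have bb_le : bb n <= full_scale R s n (P n) - threshold R k n.
    by rewrite ge_max ge_min lexx orbT andbT; lra.
  by have beta_le := le_bb n; apply/andP; split; lra.
- apply/cvgrNyPle => A; near=> n; rewrite ge_max ge_min.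
  have -> : beta n <= A by near: n; move/cvgrNyPle: beta_Ny; apply.
  suff : - A <= ln (ln (n%:R : R)) by move=> ?; apply/orP; left; lra.
  by near: n; move/cvgryPge: (@cvgn_lnln R); apply.
- have : \forall n \near \oo, `|bb n| <= ln (ln (n%:R : R)).
    near=> n.
    have beta_le0 : beta n <= 0 by near: n; move/cvgrNyPle: beta_Ny; apply.
    have lnln_ge0 : 0 <= ln (ln (n%:R : R)) by near: n; move/cvgryPge: (@cvgn_lnln R); apply.
    have T_le_F : threshold R k n <= full_scale R s n (P n).
      by near: n; exact: near_threshold_le_full_scale.
    rewrite ler_norml le_max le_min lexx ge_max ge_min /=.
    by apply/and3P; split; [apply/orP; right | | apply/orP; left]; lra.
  by case=> N _ bb_le; exists 1, N => n /bb_le; rewrite mul1r.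
Unshelve. all: by end_near.
Qed.

Lemma slow_beta_y : beta @ \oo --> +oo ->
  exists bh : nat -> R,
    [/\ forall n, bh n <= beta n,
        forall n, (0 < n)%N -> 0 <= threshold R k n + bh n <= full_scale R s n (P n),
        bh @ \oo --> +oo &
        exists C : R, exists N : nat, forall n, (N <= n)%N -> `|bh n| <= C * ln (ln n%:R)].
Proof.
move=> beta_y.
pose bh n := Num.min (beta n) (Num.max (ln (ln (n%:R : R))) (- threshold R k n)).
have bh_le n : bh n <= beta n by rewrite ge_min lexx.
exists bh; split => //.
- move=> n n0; have /andP [lo hi] := beta_range n0.
  have bh_ge : - threshold R k n <= bh n.
    by rewrite le_min le_max lexx orbT andbT; lra.
  by have beta_ge := bh_le n; apply/andP; split; lra.
- apply/cvgryPge => A; near=> n; rewrite le_min le_max.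
  have -> : A <= beta n by near: n; move/cvgryPge: beta_y; apply.
  suff -> : A <= ln (ln (n%:R : R)) by [].
  by near: n; move/cvgryPge: (@cvgn_lnln R); apply.
- have : \forall n \near \oo, `|bh n| <= ln (ln (n%:R : R)).
    near=> n.
    have beta_ge0 : 0 <= beta n by near: n; move/cvgryPge: beta_y; apply.
    have lnln_ge0 : 0 <= ln (ln (n%:R : R)) by near: n; move/cvgryPge: (@cvgn_lnln R); apply.
    have T_ge0 : 0 <= threshold R k n.
      have : 0 <= ln (n%:R : R) by rewrite ln_ge0 // ler1n; near: n; exists 1%N.
      by rewrite /threshold; have := mulr_ge0 (ler0n R k.-1) lnln_ge0; lra.
    rewrite ler_norml le_min le_max ge_min ge_max lexx /=.
    by apply/andP; split; [apply/andP; split | apply/orP; right]; lra.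
  by case=> N _ bh_le'; exists 1, N => n /bh_le'; rewrite mul1r.
Unshelve. all: by end_near.
Qed.
End SlowDivergence.

Theorem lemma6 (R : realType) (s k : nat) (hs : (1 <= s)%N) (hk : (1 <= k)%N) :
  (* (a) *)
  (forall (t : nat -> R) (P : nat -> nat) (beta : nat -> R),
     (forall n, (s <= P n)%N) ->
     (forall n, 0 <= t n <= 1) ->
     (forall n, (0 < n)%N -> scaling_eq s k n (t n) (P n) (beta n)) ->
     beta @ \oo --> -oo ->
     exists (tt : nat -> R) (PP : nat -> nat) (bb : nat -> R),
       (forall n, (s <= PP n)%N) /\ (forall n, 0 <= tt n <= 1) /\
       [/\ forall n, (0 < n)%N -> scaling_eq s k n (tt n) (PP n) (bb n),
           bb @ \oo --> -oo,
           (exists C : R, exists N : nat, forall n : nat, (N <= n)%N -> `|bb n| <= C * ln (ln (n%:R))) &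
           forall n, coupling_subgraph (Hs_pmf s n (t n) (P n))
                                       (Hs_pmf s n (tt n) (PP n))])
  /\
  (* (b) *)
  (forall (t : nat -> R) (P : nat -> nat) (beta : nat -> R),
     (forall n, (s <= P n)%N) ->
     (forall n, 0 <= t n <= 1) ->
     (forall n, (0 < n)%N -> scaling_eq s k n (t n) (P n) (beta n)) ->
     beta @ \oo --> +oo ->
     exists (th : nat -> R) (PH : nat -> nat) (bh : nat -> R),
       (forall n, (s <= PH n)%N) /\ (forall n, 0 <= th n <= 1) /\
       [/\ forall n, (0 < n)%N -> scaling_eq s k n (th n) (PH n) (bh n),
           bh @ \oo --> +oo,
           (exists C : R, exists N : nat, forall n : nat, (N <= n)%N -> `|bh n| <= C * ln (ln (n%:R))) &
           forall n, coupling_subgraph (Hs_pmf s n (th n) (PH n))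
                                       (Hs_pmf s n (t n) (P n))]).
Proof.
(* hk is unused: with the truncated k.-1, the case k = 0 is the case k = 1. *)
split=> t P beta s_le_P t01 t_scaling beta_lim.
all: have P_gt0 n : (0 < P n)%N by exact: leq_trans hs (s_le_P n).
all: have beta_range n (n0 : (0 < n)%N) := scaling_eq_range n0 (t01 n) (t_scaling n n0).
- have [bb [le_bb bb_range bb_lim bb_O]] := slow_beta_Ny P_gt0 beta_range beta_lim.
  have [tt [tt01 tt_scaling le_tt _]] := retarget_scaling hs P_gt0 t01 t_scaling bb_range.
  exists tt, P, bb; do 2 split=> //; split=> // n.
  have /andP [t0 _] := t01 n; have /andP [_ tt1] := tt01 n.
  exact: Hs_coupling_subgraph t0 (le_tt n (le_bb n)) tt1 _ _ _.
- have [bh [bh_le bh_range bh_lim bh_O]] := slow_beta_y beta_range beta_lim.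
  have [th [th01 th_scaling _ th_le]] := retarget_scaling hs P_gt0 t01 t_scaling bh_range.
  exists th, P, bh; do 2 split=> //; split=> // n.
  have /andP [th0 _] := th01 n; have /andP [_ t1] := t01 n.
  exact: Hs_coupling_subgraph th0 (th_le n (bh_le n)) t1 _ _ _.
Qed.
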